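(* Let $K$ be an algebraically closed field of characteristic $p>0$, $p\neq 2$, and $n\geq 4$. Let $\Phi$ be a group automorphism of $\mathrm{Aut}_0 K[x_1,\ldots,x_n]$ which fixes every element of $\mathrm{GL}_n(K)$ and fixes the automorphism $\psi: x_1\mapsto x_1+x_2x_3$, $x_k\mapsto x_k$ ($k\neq 1$). Let $M\in K[x_3,\ldots,x_n]$ be a monomial (a scalar multiple of a product of powers of $x_3,\ldots,x_n$) of positive total degree, and let $\varphi$ be the automorphism $x_1\mapsto x_1+M(x_3,\ldots,x_n)$, $x_k\mapsto x_k$ for $k=2,\ldots,n$. Then $\Phi(\varphi)=\varphi$.
   Context: $\mathrm{Aut}_0 K[x_1,\ldots,x_n]$ is the group under composition of $K$-algebra automorphisms of $K[x_1,\ldots,x_n]$ preserving the origin (each $\varphi(x_i)$ has zero constant term); $\mathrm{GL}_n(K)$ is its subgroup of linear automorphisms $x_i\mapsto\sum_j a_{ij}x_j$ with invertible matrix $(a_{ij})$. *)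

From HB Require Import structures.
From mathcomp Require Import all_boot all_order all_algebra.
From mathcomp Require Import mpoly.
Set Implicit Arguments. Unset Strict Implicit. Unset Printing Implicit Defensive.
Import GRing.Theory.
Local Open Scope ring_scope.

(* A K-algebra endomorphism of K[x_1..x_n] is determined by the images of the
   variables: e i = image of x_(i+1) (0-indexed variables 'X_i, i : 'I_n). *)
Definition endo (K : fieldType) (n : nat) := n.-tuple {mpoly K[n]}.

Definition endo_apply (K : fieldType) n (e : endo K n) (p : {mpoly K[n]}) :
  {mpoly K[n]} := p \mPo e.

Definition endo_comp (K : fieldType) n (f g : endo K n) : endo K n :=
  [tuple endo_apply f (tnth g i) | i < n].

Definition endo_id (K : fieldType) n : endo K n := [tuple 'X_i | i < n].

Definition is_aut (K : fieldType) n (f : endo K n) : Prop :=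
  exists g : endo K n, endo_comp f g = endo_id K n /\ endo_comp g f = endo_id K n.

Definition origin_preserving (K : fieldType) n (f : endo K n) : Prop :=
  forall i : 'I_n, (tnth f i)@_0 = 0.

Definition is_aut0 (K : fieldType) n (f : endo K n) : Prop :=
  is_aut f /\ origin_preserving f.

Definition linear_endo (K : fieldType) n (A : 'M[K]_n) : endo K n :=
  [tuple \sum_(j < n) A i j *: 'X_j | i < n].

(* A variable indexed by a natural number (0-indexed: var k = x_(k+1));
   equal to 0 if k >= n (never used in that case). *)
Definition var (K : fieldType) n (k : nat) : {mpoly K[n]} :=
  if insub k is Some i then 'X_i else 0.

Definition elem1 (K : fieldType) n (P : {mpoly K[n]}) : endo K n :=
  [tuple (if val i == 0%N then 'X_i + P else 'X_i) | i < n].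

Definition psi (K : fieldType) n : endo K n := elem1 (var K n 1 * var K n 2).

(* Phi is a group automorphism of Aut_0 (given as a map on endo that maps
   Aut_0 bijectively onto Aut_0 and is multiplicative there). *)
Definition group_aut_Aut0 (K : fieldType) n (Phi : endo K n -> endo K n) : Prop :=
  [/\ (forall f, is_aut0 f -> is_aut0 (Phi f)),
      (forall f g, is_aut0 f -> is_aut0 g -> Phi f = Phi g -> f = g),
      (forall h, is_aut0 h -> exists2 f, is_aut0 f & Phi f = h) &
      (forall f g, is_aut0 f -> is_aut0 g ->
         Phi (endo_comp f g) = endo_comp (Phi f) (Phi g))].

From HB Require Import structures.
From mathcomp Require Import all_boot all_order all_algebra.
From mathcomp Require Import perm mpoly.
Set Implicit Arguments. Unset Strict Implicit. Unset Printing Implicit Defensive.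
Import GRing.Theory.
Local Open Scope ring_scope.

(* Write E_j(P) for the elementary automorphism x_j |-> x_j + P.  If i <> j
   and the monomials P, Q involve neither x_i nor x_j, then
     E_j(P) E_i(x_j Q) = E_i(P Q) E_i(x_j Q) E_j(P),
   so Phi fixes E_i(P Q) as soon as it fixes E_j(P) and E_i(x_j Q).  Phi fixes
   the linear E_j(c x_k) and psi = E_1(x_2 x_3); taking j = 3 gives every
   E_1(x_2 x_k), k >= 3.  Induction on the degree of M then yields E_1(c M x_k)
   from j = 2, P = c M, Q = x_k, where E_2(c M) is fixed because it is E_1(c M)
   conjugated by the linear transposition x_1 <-> x_2. *)

Section Endomorphisms.
Variables (K : fieldType) (n : nat).
Implicit Types (f g h : endo K n) (p : {mpoly K[n]}) (m : 'X_{1..n}).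

Lemma tnth_endo_comp f g i : tnth (endo_comp f g) i = tnth g i \mPo f.
Proof. by rewrite tnth_mktuple. Qed.

Lemma comp_mpolyXU_tnth i f : 'X_i \mPo f = tnth f i.
Proof. by rewrite comp_mpolyXU -tnth_nth. Qed.

Lemma comp_mpolyA p f g : (p \mPo g) \mPo f = p \mPo endo_comp f g.
Proof.
rewrite (comp_mpolyEX p g) (comp_mpolyEX p) raddf_sum /=; apply: eq_bigr => m _.
rewrite comp_mpolyZ !comp_mpolyX rmorph_prod /=; congr (_ *: _).
by apply: eq_bigr => i _; rewrite rmorphXn tnth_mktuple.
Qed.

Lemma endo_compA f g h :
  endo_comp f (endo_comp g h) = endo_comp (endo_comp f g) h.
Proof. by apply: eq_from_tnth => i; rewrite !tnth_endo_comp comp_mpolyA. Qed.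

Lemma endo_comp_id f : endo_comp f (endo_id K n) = f.
Proof.
by apply: eq_from_tnth => i; rewrite tnth_endo_comp tnth_mktuple comp_mpolyXU_tnth.
Qed.

Lemma comp_mpolyX_fixed m f :
  (forall i, m i != 0%N -> tnth f i = 'X_i) -> 'X_[m] \mPo f = 'X_[m].
Proof.
move=> fX; rewrite comp_mpolyX [RHS]mpolyXE_id; apply: eq_bigr => i _.
by have [->|/fX ->] := eqVneq (m i) 0%N; rewrite ?expr0.
Qed.

Lemma exists_mnm_neq0 m : m != 0%MM -> exists i, m i != 0%N.
Proof.
move=> nz_m; apply/existsP; apply: contraR nz_m => /existsPn m0.
by apply/eqP/mnmP => i; rewrite mnm0E; apply/eqP/negbNE/m0.
Qed.

Section OriginPreserving.
Variable f : endo K n.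
Hypothesis f0 : origin_preserving f.

Lemma mcoeff0_comp_mpolyX m : ('X_[m] \mPo f)@_0 = 'X_[m]@_0.
Proof.
have [->|nz_m] := eqVneq m 0%MM; first by rewrite mpolyX0 comp_mpoly1.
have [i mi] := exists_mnm_neq0 nz_m.
rewrite mcoeffX (negbTE nz_m) comp_mpolyX (bigD1 i) //=.
by rewrite (rmorphM (mcoeff 0)) rmorphXn /= f0 expr0n (negbTE mi) mul0r.
Qed.

Lemma mcoeff0_comp_mpoly p : (p \mPo f)@_0 = p@_0.
Proof.
rewrite {2}(mpolyE p) comp_mpolyEX !raddf_sum; apply: eq_bigr => m _ /=.
by rewrite !mcoeffZ mcoeff0_comp_mpolyX.
Qed.

End OriginPreserving.

Lemma aut0_comp f g : is_aut0 f -> is_aut0 g -> is_aut0 (endo_comp f g).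
Proof.
move=> [[f' [ff' f'f]] f0] [[g' [gg' g'g]] g0]; split; last first.
  by move=> i; rewrite tnth_endo_comp mcoeff0_comp_mpoly.
exists (endo_comp g' f'); split.
  by rewrite endo_compA -(endo_compA f) gg' endo_comp_id.
by rewrite endo_compA -(endo_compA g') f'f endo_comp_id.
Qed.

Lemma endo_comp_linear (A B : 'M[K]_n) :
  endo_comp (linear_endo A) (linear_endo B) = linear_endo (B *m A).
Proof.
apply: eq_from_tnth => i; rewrite tnth_endo_comp !tnth_mktuple raddf_sum /=.
under eq_bigr => j _ do
  rewrite comp_mpolyZ comp_mpolyXU_tnth tnth_mktuple scaler_sumr.
rewrite exchange_big; apply: eq_bigr => k _.
by rewrite mxE scaler_suml; apply: eq_bigr => j _; rewrite scalerA.
Qed.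

Lemma linear_endo1 : linear_endo 1%:M = endo_id K n.
Proof.
apply: eq_from_tnth => i; rewrite !tnth_mktuple (bigD1 i) //= big1.
  by rewrite mxE eqxx scale1r addr0.
by move=> j ji; rewrite mxE eq_sym (negbTE ji) scale0r.
Qed.

Lemma aut0_linear_endo (A : 'M[K]_n) : A \in unitmx -> is_aut0 (linear_endo A).
Proof.
move=> uA; split.
  exists (linear_endo (invmx A)).
  by rewrite !endo_comp_linear mulVmx ?mulmxV ?linear_endo1.
move=> i; rewrite tnth_mktuple raddf_sum big1 // => j _ /=.
by rewrite mcoeffZ mcoeffX mnm1_eq0 mulr0.
Qed.

Definition perm_endo (s : {perm 'I_n}) : endo K n := [tuple 'X_(s i) | i < n].

Lemma linear_endo_perm (s : {perm 'I_n}) :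
  linear_endo (perm_mx s : 'M[K]_n) = perm_endo s.
Proof.
apply: eq_from_tnth => i; rewrite !tnth_mktuple (bigD1 (s i)) //= big1.
  by rewrite !mxE eqxx scale1r addr0.
by move=> j sij; rewrite !mxE eq_sym (negbTE sij) scale0r.
Qed.

End Endomorphisms.

Section Elementary.
Variables (K : fieldType) (n : nat).
Implicit Types (i j k : 'I_n) (P Q : {mpoly K[n]}) (m b r : 'X_{1..n}).

Definition elementary (j : 'I_n) P : endo K n :=
  [tuple if i == j then 'X_i + P else 'X_i | i < n].

Lemma tnth_elementary j P i :
  tnth (elementary j P) i = if i == j then 'X_i + P else 'X_i.
Proof. by rewrite tnth_mktuple. Qed.

Lemma comp_mpolyX_elementary j P m : m j = 0%N -> 'X_[m] \mPo elementary j P = 'X_[m].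
Proof.
move=> mj; apply: comp_mpolyX_fixed => i mi; rewrite tnth_elementary.
by have [ij|//] := eqVneq i j; move: mi; rewrite ij mj.
Qed.

Lemma endo_comp_elementary j P Q : Q \mPo elementary j P = Q ->
  endo_comp (elementary j P) (elementary j Q) = elementary j (P + Q).
Proof.
move=> PQ; apply: eq_from_tnth => i; rewrite tnth_endo_comp !tnth_elementary.
have [->|ij] := eqVneq i j; last first.
  by rewrite comp_mpolyXU_tnth tnth_elementary (negbTE ij).
by rewrite comp_mpolyD PQ comp_mpolyXU_tnth tnth_elementary eqxx addrA.
Qed.

Lemma elementary0 j : elementary j 0 = endo_id K n.
Proof.
by apply: eq_from_tnth => i; rewrite tnth_elementary tnth_mktuple addr0; case: eqP.
Qed.

Lemma aut0_elementary j c b : b j = 0%N -> b != 0%MM ->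
  is_aut0 (elementary j (c *: 'X_[b])).
Proof.
move=> bj nz_b; split.
  exists (elementary j (- c *: 'X_[b])).
  rewrite !endo_comp_elementary ?comp_mpolyZ ?comp_mpolyX_elementary //.
  by rewrite -!scalerDl addrN addNr scale0r elementary0.
move=> i; rewrite tnth_elementary.
by case: eqP => _;
  rewrite ?mcoeffD ?mcoeffZ !mcoeffX ?mnm1_eq0 ?(negbTE nz_b) ?mulr0 ?addr0.
Qed.

Lemma elementary_linear j k c : j != k ->
  elementary j (c *: 'X_k) = linear_endo (1%:M + c *: delta_mx j k).
Proof.
move=> jk; apply: eq_from_tnth => i.
have -> : tnth (linear_endo (1%:M + c *: delta_mx j k)) i =
    tnth (linear_endo 1%:M) i + \sum_l (c *: delta_mx j k) i l *: 'X_l.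
  by rewrite !tnth_mktuple -big_split; apply: eq_bigr => l _; rewrite mxE scalerDl.
rewrite linear_endo1 tnth_elementary tnth_mktuple.
case: eqP => [->|/eqP ij]; last first.
  by rewrite big1 ?addr0 // => l _; rewrite !mxE (negbTE ij) mulr0 scale0r.
rewrite (bigD1 k) //= big1 => [|l lk]; first by rewrite !mxE !eqxx mulr1 addr0.
by rewrite !mxE eqxx (negbTE lk) mulr0 scale0r.
Qed.

Lemma unitmx_transvection j k c : j != k ->
  (1%:M + c *: delta_mx j k : 'M[K]_n) \in unitmx.
Proof.
move=> jk.
suff /mulmx1_unit[] :
  (1%:M + c *: delta_mx j k) *m (1%:M - c *: delta_mx j k) = 1%:M by [].
rewrite mulmxDl !mulmxBr !mul1mx !mulmx1 -scalemxAl -scalemxAr.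
by rewrite mul_delta_mx_cond eq_sym (negbTE jk) mulr0n !scaler0 subr0 subrK.
Qed.

Lemma elementary_tperm i j P (T := perm_endo K (tperm i j)) :
  P \mPo T = P -> elementary j P = endo_comp T (endo_comp (elementary i P) T).
Proof.
move=> PT; apply: eq_from_tnth => l.
have tnthT l' : tnth T l' = 'X_(tperm i j l') by rewrite tnth_mktuple.
have XT l' : 'X_l' \mPo T = 'X_(tperm i j l') by rewrite comp_mpolyXU_tnth tnthT.
rewrite !tnth_endo_comp tnth_elementary tnthT comp_mpolyXU_tnth tnth_elementary.
have -> : (tperm i j l == i) = (l == j).
  by rewrite -(inj_eq (@perm_inj _ (tperm i j))) tpermK tpermL.
by case: eqP; rewrite ?comp_mpolyD ?PT XT tpermK.
Qed.

Lemma elementary_commutator i j c b r :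
  i != j -> b i = 0%N -> b j = 0%N -> r i = 0%N -> r j = 0%N ->
  let s := elementary j (c *: 'X_[b]) in
  let t := elementary i ('X_j * 'X_[r]) in
  endo_comp s t = endo_comp (elementary i (c *: 'X_[b + r])) (endo_comp t s).
Proof.
move=> ij bi bj ri rj s t; have ji := ij; rewrite eq_sym in ji.
apply: eq_from_tnth => l; rewrite !tnth_endo_comp !tnth_elementary.
have [->|li] := eqVneq l i.
  rewrite (negbTE ij) !comp_mpolyD !rmorphM /= !comp_mpolyXU_tnth !tnth_elementary.
  rewrite (negbTE ij) !eqxx comp_mpolyD rmorphM /= !comp_mpolyXU_tnth.
  rewrite !tnth_elementary (negbTE ji) eqxx !comp_mpolyX_elementary //.
  by rewrite mpolyXD scalerAl mulrDl addrA [RHS]addrAC.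
rewrite comp_mpolyXU_tnth tnth_elementary.
have [->|_] := eqVneq l j; last first.
  by rewrite !(comp_mpolyXU_tnth, tnth_elementary, negbTE li).
by rewrite !(comp_mpolyD, comp_mpolyZ, comp_mpolyXU_tnth, tnth_elementary, negbTE ji,
  comp_mpolyX_elementary _ bi).
Qed.

End Elementary.

Section FixedPoints.
Variables (K : fieldType) (n : nat) (Phi : endo K n -> endo K n).
Hypothesis PhiM : forall f g, is_aut0 f -> is_aut0 g ->
  Phi (endo_comp f g) = endo_comp (Phi f) (Phi g).
Hypothesis Phi_linear : forall A : 'M[K]_n, A \in unitmx ->
  Phi (linear_endo A) = linear_endo A.
Implicit Types (f g s t E : endo K n) (i j k : 'I_n) (b r m : 'X_{1..n}).

Local Notation fixed f := (Phi f = f).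

Lemma fixed_comp f g : is_aut0 f -> is_aut0 g -> fixed f -> fixed g ->
  fixed (endo_comp f g).
Proof. by move=> af ag ff fg; rewrite PhiM // ff fg. Qed.

Lemma fixed_cancel_comp f g : is_aut0 f -> is_aut0 g -> fixed g ->
  fixed (endo_comp f g) -> fixed f.
Proof.
move=> af ag fg; rewrite PhiM // fg => fgf.
have [[g' [gg' _]] _] := ag.
by rewrite -[Phi f]endo_comp_id -gg' endo_compA fgf -endo_compA gg' endo_comp_id.
Qed.

Lemma fixed_commutator s t E : is_aut0 s -> is_aut0 t -> is_aut0 E ->
  fixed s -> fixed t -> endo_comp s t = endo_comp E (endo_comp t s) -> fixed E.
Proof.
move=> a_s a_t a_E fs ft stE.
apply: (fixed_cancel_comp a_E (aut0_comp a_t a_s)); first exact: fixed_comp.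
by rewrite -stE fixed_comp.
Qed.

Lemma fixed_elementary_linear j k c : j != k -> fixed (elementary j (c *: 'X_k)).
Proof. by move=> jk; rewrite elementary_linear // Phi_linear ?unitmx_transvection. Qed.

Lemma fixed_elementary_tperm i j c b : b i = 0%N -> b j = 0%N -> b != 0%MM ->
  fixed (elementary i (c *: 'X_[b])) -> fixed (elementary j (c *: 'X_[b])).
Proof.
move=> bi bj nz_b fi.
have bT : c *: 'X_[b] \mPo perm_endo K (tperm i j) = c *: 'X_[b].
  rewrite comp_mpolyZ comp_mpolyX_fixed // => l bl; rewrite tnth_mktuple tpermD //.
    by apply: contraNneq bl => <-; rewrite bi.
  by apply: contraNneq bl => <-; rewrite bj.
have a_T := aut0_linear_endo (unitmx_perm K (tperm i j)).
have fT := Phi_linear (unitmx_perm K (tperm i j)).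
rewrite linear_endo_perm in a_T fT.
rewrite (elementary_tperm bT); apply: fixed_comp => //.
  by apply: aut0_comp => //; apply: aut0_elementary.
by apply: fixed_comp => //; apply: aut0_elementary.
Qed.

Lemma fixed_elementary_commutator i j c b r :
  i != j -> b i = 0%N -> b j = 0%N -> b != 0%MM -> r i = 0%N -> r j = 0%N ->
  fixed (elementary j (c *: 'X_[b])) -> fixed (elementary i ('X_j * 'X_[r])) ->
  fixed (elementary i (c *: 'X_[b + r])).
Proof.
move=> ij bi bj nz_b ri rj fs ft.
have a_t : is_aut0 (elementary i ('X_j * 'X_[r] : {mpoly K[n]})).
  rewrite -mpolyXD -[X in elementary _ X]scale1r; apply: aut0_elementary.
    by rewrite mnmDE mnm1E eq_sym (negbTE ij) ri.
  by rewrite mnmD_eq0 mnm1_eq0.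
apply: fixed_commutator fs ft (elementary_commutator c ij bi bj ri rj) => //.
- exact: aut0_elementary.
- apply: aut0_elementary; first by rewrite mnmDE bi ri.
  by rewrite mnmD_eq0 negb_and nz_b.
Qed.

Variables i1 i2 i3 : 'I_n.
Hypotheses (i12 : i1 != i2) (i13 : i1 != i3) (i23 : i2 != i3).
Hypothesis Phi_psi : fixed (elementary i1 ('X_i2 * 'X_i3)).

Lemma fixed_elementary_quadratic k : k != i1 -> k != i2 ->
  fixed (elementary i1 ('X_i2 * 'X_k)).
Proof.
move=> k1 k2; have [->//|k3] := eqVneq k i3.
have := @fixed_elementary_commutator i1 i3 1 U_(k) U_(i2) i13.
rewrite !mnm1E mnm1_eq0 (negbTE k1) (negbTE k3) [i2 == i1]eq_sym.
rewrite (negbTE i12) (negbTE i23).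
rewrite !scale1r mpolyXD mulrC [_ * 'X_i2]mulrC; apply => //.
by rewrite -[X in elementary _ X]scale1r fixed_elementary_linear // eq_sym.
Qed.

Lemma fixed_elementary_monomial c m : m i1 = 0%N -> m i2 = 0%N -> m != 0%MM ->
  fixed (elementary i1 (c *: 'X_[m])).
Proof.
have [d] := ubnP (mdeg m); elim: d c m => // d IH c m md m1 m2 nz_m.
have [k mk] := exists_mnm_neq0 nz_m.
have k1 : k != i1 by apply: contraNneq mk => ->; rewrite m1.
have k2 : k != i2 by apply: contraNneq mk => ->; rewrite m2.
have km : (U_(k) <= m)%MM by rewrite lep1mP.
rewrite -(submK km).
have [->|nz_m'] := eqVneq (m - U_(k))%MM 0%MM.
  by rewrite add0m fixed_elementary_linear // eq_sym.
have m'1 : (m - U_(k))%MM i1 = 0%N by rewrite mnmBE m1.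
have m'2 : (m - U_(k))%MM i2 = 0%N by rewrite mnmBE m2.
apply: (fixed_elementary_commutator i12) => //.
- by rewrite mnm1E (negbTE k1).
- by rewrite mnm1E (negbTE k2).
- apply: (@fixed_elementary_tperm i1) => //; apply: IH => //.
  by move: md; rewrite -{1}(submK km) mdegD mdeg1 addn1 ltnS.
- exact: fixed_elementary_quadratic.
Qed.

End FixedPoints.

Lemma var_val (K : fieldType) n (i : 'I_n) : var K n (val i) = 'X_i.
Proof. by rewrite /var valK. Qed.

Theorem mainTheorem5 (K : closedFieldType) (p : nat) (n : nat)
  (hp : p \in [pchar K]) (hp2 : p != 2%N) (hn : (4 <= n)%N)
  (Phi : endo K n -> endo K n)
  (hPhi : group_aut_Aut0 Phi)
  (hGL : forall A : 'M[K]_n, A \in unitmx -> Phi (linear_endo A) = linear_endo A)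
  (hpsi : Phi (psi K n) = psi K n)
  (c : K) (m : 'X_{1..n})
  (hc : c != 0)
  (hm01 : forall i : 'I_n, (val i < 2)%N -> m i = 0%N)
  (hdeg : (0 < mdeg m)%N) :
  Phi (elem1 (c *: 'X_[m])) = elem1 (c *: 'X_[m]).
Proof.
have [x1 x2 x3] : [/\ 0 < n, 1 < n & 2 < n]%N by split; apply: leq_trans hn.
pose i1 := Ordinal x1; pose i2 := Ordinal x2; pose i3 := Ordinal x3.
have elem1E P : elem1 P = elementary i1 P by [].
have psiE : psi K n = elementary i1 ('X_i2 * 'X_i3).
  by rewrite /psi -!(var_val K i2, var_val K i3).
have [_ _ _ PhiM] := hPhi.
rewrite elem1E; apply: (fixed_elementary_monomial PhiM hGL (i2 := i2) (i3 := i3)) => //.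
- by rewrite -psiE.
- exact: hm01.
- exact: hm01.
- by rewrite -mdeg_eq0 -lt0n.
Qed.
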